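(* Let $Q$ be a finite Moufang loop, $S\le Q$, and $x,y\in Q$ with $xS\cap yS\neq\emptyset$. Let $f_{x,y}:xS\cap yS\to xS\cap yS$ be the permutation $xs\mapsto ys$. Let $xs=yr\in xS\cap yS$ with $s,r\in S$. Then $xs$ belongs to a cycle of $f_{x,y}$ whose length is the order $|sr^{-1}|$ of the element $sr^{-1}\in S$. In particular, if $S\neq 1$, then $|xS\cap yS|$ can be written as a sum of orders of some (possibly repeated) nonidentity elements of $S$.
   Context: A Moufang loop is a loop satisfying $((xy)x)z=x(y(xz))$ (equivalently $((xy)z)y=x(y(zy))$, etc.); Moufang loops have two-sided inverses $x^{-1}$ and are right Bol, which guarantees that $f_{x,y}$ is a well-defined permutation of $xS\cap yS$. Here $xS=\{xs:s\in S\}$. *)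

From mathcomp Require Import all_boot.
Set Implicit Arguments. Unset Strict Implicit. Unset Printing Implicit Defensive.

Section Loops.
Variable T : finType.
Variable mul : T -> T -> T.
Variable e : T.

Definition is_loop : Prop :=
  (forall a, mul e a = a) /\ (forall a, mul a e = a) /\
  (forall a b, exists! x, mul a x = b) /\
  (forall a b, exists! y, mul y a = b).

Definition is_moufang_loop : Prop :=
  is_loop /\ forall x y z, mul (mul (mul x y) x) z = mul x (mul y (mul x z)).

Definition is_subloop (S : {set T}) : Prop :=
  e \in S /\
  (forall a b, a \in S -> b \in S -> mul a b \in S) /\
  (forall a b x, a \in S -> b \in S -> mul a x = b -> x \in S) /\
  (forall a b y, a \in S -> b \in S -> mul y a = b -> y \in S).

Definition lcoset (x : T) (S : {set T}) : {set T} := [set mul x s | s in S].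

Definition ldiv (x z : T) : T := odflt z [pick s | mul x s == z].

(* Inverse (two-sided in a Moufang loop). *)
Definition linv (a : T) : T := odflt a [pick b | mul a b == e].

(* f_{x,y} : x s |-> y s, i.e. z |-> y (x \ z); a permutation of xS ∩ yS. *)
Definition fxy (x y : T) (z : T) : T := mul y (ldiv x z).

(* Powers a^n (well defined in Moufang loops by diassociativity). *)
Fixpoint lpow (a : T) (n : nat) : T :=
  if n is m.+1 then mul a (lpow a m) else e.

Definition is_order (a : T) (n : nat) : Prop :=
  0 < n /\ lpow a n = e /\ forall m, 0 < m < n -> lpow a m <> e.

End Loops.

(* If x s = y r and a = s r^-1, then f_{x,y} (x s) = y s = x (a s), because
   y = (x s) r^-1 and the right Bol identity gives ((x s) r^-1) s = x ((s r^-1) s).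
   The new representation x (a s) = y s has the same ratio (a s) s^-1 = a, so
   f_{x,y}^m (x s) = x (a^m s), and the cycle of x s has length |a|.  Splitting
   xS ∩ yS into cycles of the permutation f_{x,y} gives the sum formula; when
   x = y, use instead the pair (1, g) for some g != 1 in S, as xS ∩ xS and
   1S ∩ gS both have |S| elements. *)
From mathcomp Require Import all_boot.
Set Implicit Arguments. Unset Strict Implicit. Unset Printing Implicit Defensive.

Section Orbits.
Variables (T : finType) (f : T -> T).
Hypothesis f_inj : injective f.

Lemma iter_neq_lt_order z m : 0 < m < order f z -> iter m f z != z.
Proof.
case/andP=> m_gt0 lt_m_order; apply: contraTneq m_gt0 => fmz.
by rewrite -(findex_iter lt_m_order) fmz findex0.
Qed.

Lemma fconnect_closed (I : {set T}) z w :
  {in I, forall u, f u \in I} -> z \in I -> fconnect f z w -> w \in I.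
Proof.
move=> fI zI /iter_findex <-; elim: (findex f z w) => //= n; exact: fI.
Qed.

Lemma card_orbit_decomposition (I : {set T}) :
  {in I, forall u, f u \in I} ->
  exists2 reps : seq T, {subset reps <= I} & #|I| = sumn [seq order f z | z <- reps].
Proof.
elim: {I}_.+1 {-2}I (ltnSn #|I|) => // n IH I ltIn fI.
have [->|[z zI]] := set_0Vmem I; first by exists [::]; rewrite ?cards0.
pose O := [set w in fconnect f z].
have OI : O \subset I by apply/subsetP => w; rewrite inE; exact: fconnect_closed.
have cardI : #|I| = order f z + #|I :\: O|.
  by rewrite -(cardsID O I) (setIidPr OI) cardsE.
have fID : {in I :\: O, forall u, f u \in I :\: O}.
  move=> u /setDP[uI uO]; rewrite !inE fI // andbT; apply: contra uO.
  by rewrite !inE => /connect_trans; apply; rewrite fconnect_sym // fconnect1.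
have ltID : #|I :\: O| < n.
  by rewrite -ltnS (leq_trans _ ltIn) // ltnS cardI -add1n leq_add2r order_gt0.
have [reps sub_reps cardID] := IH _ ltID fID.
exists (z :: reps); last by rewrite cardI cardID.
by move=> u; rewrite inE => /predU1P[-> //|/sub_reps/setDP[]].
Qed.

End Orbits.

Section MoufangLoop.
Variables (T : finType) (mul : T -> T -> T) (e : T).
Hypothesis hQ : is_moufang_loop mul e.
Local Notation "a * b" := (mul a b).
Local Notation "a ^-1" := (linv mul e a).
Local Notation lpow := (lpow mul e).

Lemma mul1l a : e * a = a. Proof. by case: hQ => [[]]. Qed.
Lemma mul1r a : a * e = a. Proof. by case: hQ => [[? []]]. Qed.

Lemma mulI a : injective (mul a).
Proof.
case: hQ => [[_ [_ [ldiv_uniq _]]] _] b c abc.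
have [u [_ u_uniq]] := ldiv_uniq a (a * b).
by rewrite -(u_uniq b) // (u_uniq c).
Qed.

Lemma mulIr a : injective (mul^~ a).
Proof.
case: hQ => [[_ [_ [_ rdiv_uniq]]] _] b c bac.
have [u [_ u_uniq]] := rdiv_uniq a (b * a).
by rewrite -(u_uniq b) // (u_uniq c).
Qed.

Lemma mul_pick_solution a b c : a * odflt c [pick s | a * s == b] = b.
Proof.
case: pickP => [s /eqP //|no_solution].
case: hQ => [[_ [_ [ldiv_uniq _]]] _]; have [s [abs _]] := ldiv_uniq a b.
by move: (no_solution s); rewrite abs eqxx.
Qed.

Lemma mul_ldiv a b : a * ldiv mul a b = b. Proof. exact: mul_pick_solution. Qed.
Lemma mul_linv a : a * a^-1 = e. Proof. exact: mul_pick_solution. Qed.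

Lemma ldiv_mul a s : ldiv mul a (a * s) = s.
Proof. by apply: (@mulI a); rewrite mul_ldiv. Qed.

Lemma moufang a b c : ((a * b) * a) * c = a * (b * (a * c)).
Proof. by case: hQ. Qed.

Lemma flexible a b : (a * b) * a = a * (b * a).
Proof. by have := moufang a b e; rewrite !mul1r. Qed.

Lemma linv_mulK a c : a^-1 * (a * c) = c.
Proof. by apply: (@mulI a); rewrite -moufang mul_linv mul1l. Qed.

Lemma mul_linvl a : a^-1 * a = e.
Proof. by have := linv_mulK a e; rewrite mul1r. Qed.

Lemma mul_linvK w a : (w * a) * a^-1 = w.
Proof. by have := moufang a (ldiv mul a w) a^-1; rewrite mul_linv mul1r mul_ldiv. Qed.

Lemma linvK a : (a^-1)^-1 = a.
Proof. by apply: (@mulI a^-1); rewrite mul_linv mul_linvl. Qed.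

Lemma linvM a b : (a * b)^-1 = b^-1 * a^-1.
Proof.
have := linv_mulK (a * b) b^-1; rewrite mul_linvK => <-.
by rewrite mul_linvK.
Qed.

(* The Moufang identity applied to inverses, inverted back. *)
Lemma right_bol p q c : ((p * q) * c) * q = p * (q * (c * q)).
Proof.
have /(congr1 (linv mul e)) := moufang q^-1 c^-1 p^-1.
by rewrite !linvM !linvK -flexible => <-.
Qed.

Lemma lpow_mul a n z : lpow a n * z = iter n (mul a) z.
Proof.
elim: n {-2}n (leqnn n) z => [|k IH] n le_nk z.
  by move: le_nk; rewrite leqn0 => /eqP->; exact: mul1l.
case: n le_nk => [|[|n]] le_nk; [exact: mul1l | by rewrite /= mul1r | ].
have lpowSS : lpow a n.+2 = (a * lpow a n) * a.
  change (a * lpow a n.+1 = lpow a n.+1 * a).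
  by rewrite -[in LHS](mul1r (lpow a n.+1)) !IH // -iterS iterSr mul1r.
by rewrite lpowSS moufang IH 1?ltnW // -iterS -iterSr.
Qed.

Lemma mul_shift x y u v : x * u = y * v -> y * u = x * ((u * v^-1) * u).
Proof.
move=> xu_yv; have -> : y = (x * u) * v^-1 by rewrite xu_yv mul_linvK.
by rewrite right_bol flexible.
Qed.

Section Cosets.
Variables x y : T.
Local Notation f := (fxy mul x y).

Lemma fxy_inj : injective f.
Proof. by move=> z1 z2 /mulI eq_ldiv; rewrite -(mul_ldiv x z1) eq_ldiv mul_ldiv. Qed.

Lemma fxy_lcoset u : f (x * u) = y * u.
Proof. by rewrite /fxy ldiv_mul. Qed.

Lemma iter_fxy u v m : x * u = y * v ->
  iter m f (x * u) = x * (lpow (u * v^-1) m * u).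
Proof.
elim: m u v => [|m IH] u v xu_yv; first by rewrite mul1l.
have yu_eq := mul_shift xu_yv.
rewrite iterSr fxy_lcoset yu_eq (IH _ u) -?yu_eq // mul_linvK.
by rewrite !lpow_mul iterSr.
Qed.

Lemma iter_fxy_id s r m : x * s = y * r ->
  (iter m f (x * s) = x * s) <-> lpow (s * r^-1) m = e.
Proof.
move=> xs_yr; rewrite (iter_fxy m xs_yr); split=> [/mulI|->]; last by rewrite mul1l.
by rewrite -[RHS in _ = RHS -> _]mul1l => /mulIr.
Qed.

Lemma fxy_order s r : x * s = y * r -> is_order mul e (s * r^-1) (order f (x * s)).
Proof.
move=> xs_yr; split; first exact: order_gt0.
split=> [|m lt_m_order]; first exact/(iter_fxy_id _ xs_yr)/iter_order/fxy_inj.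
move/(iter_fxy_id _ xs_yr)/eqP; apply/negP.
exact: iter_neq_lt_order lt_m_order.
Qed.

End Cosets.

Section Subloop.
Variable S : {set T}.
Hypothesis hS : is_subloop mul e S.
Local Notation I x y := (lcoset mul x S :&: lcoset mul y S).

Lemma subloop1 : e \in S. Proof. by case: hS. Qed.

Lemma subloopM a b : a \in S -> b \in S -> a * b \in S.
Proof. by case: hS => _ [closedM _]; apply: closedM. Qed.

Lemma subloopV a : a \in S -> a^-1 \in S.
Proof.
by case: hS => _ [_ [closed_ldiv _]] aS; apply: (closed_ldiv a e); rewrite ?subloop1 ?mul_linv.
Qed.

Lemma ldiv_lcoset x z : z \in lcoset mul x S -> ldiv mul x z \in S.
Proof. by case/imsetP => s sS ->; rewrite ldiv_mul. Qed.

Lemma card_lcoset x : #|lcoset mul x S| = #|S|.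
Proof. exact/card_imset/mulI. Qed.

Lemma lcoset_id g : g \in S -> lcoset mul g S = S.
Proof.
move=> gS; apply/eqP; rewrite eqEcard card_lcoset leqnn andbT.
by apply/subsetP => _ /imsetP[s sS ->]; apply: subloopM.
Qed.

Definition coset_ratio x y z := ldiv mul x z * (ldiv mul y z)^-1.

Lemma lcoset_meet_ldiv x y z : z \in I x y ->
  [/\ ldiv mul x z \in S, ldiv mul y z \in S & x * ldiv mul x z = y * ldiv mul y z].
Proof. by case/setIP=> /ldiv_lcoset sS /ldiv_lcoset rS; rewrite !mul_ldiv. Qed.

Lemma fxy_closed x y z : z \in I x y -> fxy mul x y z \in I x y.
Proof.
case/lcoset_meet_ldiv=> sS rS xs_yr; apply/setIP; split; apply/imsetP; last first.
  by exists (ldiv mul x z).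
rewrite -{1}(mul_ldiv x z) fxy_lcoset (mul_shift xs_yr).
by exists (coset_ratio x y z * ldiv mul x z); rewrite ?subloopM ?subloopV.
Qed.

Lemma coset_ratio_order x y z : x != y -> z \in I x y ->
  [/\ coset_ratio x y z \in S, coset_ratio x y z <> e &
       is_order mul e (coset_ratio x y z) (order (fxy mul x y) z)].
Proof.
move=> neq_xy /lcoset_meet_ldiv[sS rS xs_yr]; rewrite /coset_ratio.
split; first by rewrite subloopM ?subloopV.
  move=> sr_e; have s_r : ldiv mul x z = ldiv mul y z.
    by apply: (@mulIr (ldiv mul y z)^-1); rewrite sr_e mul_linv.
  by move: xs_yr; rewrite s_r => /mulIr /eqP; rewrite (negbTE neq_xy).
by have := fxy_order xs_yr; rewrite mul_ldiv.
Qed.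

Lemma card_lcoset_meet x y : x != y -> exists l : seq (T * nat),
  (forall p, p \in l -> [/\ p.1 \in S, p.1 <> e & is_order mul e p.1 p.2]) /\
  #|I x y| = sumn (map snd l).
Proof.
move=> neq_xy.
have [reps sub_reps ->] := card_orbit_decomposition (@fxy_inj x y) (@fxy_closed x y).
exists [seq (coset_ratio x y z, order (fxy mul x y) z) | z <- reps]; split.
  by move=> _ /mapP[z /sub_reps zI ->]; exact: coset_ratio_order.
by rewrite -map_comp.
Qed.

End Subloop.
End MoufangLoop.

Theorem lemma6p2 (T : finType) (mul : T -> T -> T) (e : T)
  (hQ : is_moufang_loop mul e) (S : {set T}) (hS : is_subloop mul e S)
  (x y : T) (hne : lcoset mul x S :&: lcoset mul y S != set0) :
  (forall s r, s \in S -> r \in S -> mul x s = mul y r ->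
     exists n, is_order mul e (mul s (linv mul e r)) n /\
       iter n (fxy mul x y) (mul x s) = mul x s /\
       (forall m, 0 < m < n -> iter m (fxy mul x y) (mul x s) <> mul x s)) /\
  (S != [set e] ->
     exists l : seq (T * nat),
       (forall p, p \in l -> [/\ p.1 \in S, p.1 <> e & is_order mul e p.1 p.2]) /\
       #|lcoset mul x S :&: lcoset mul y S| = sumn (map snd l)).
Proof.
split=> [s r _ _ xs_yr | S_nontrivial].
  exists (order (fxy mul x y) (mul x s)); split; first exact: fxy_order.
  split; first exact/iter_order/(fxy_inj hQ).
  by move=> m /iter_neq_lt_order /eqP.
have [<-|neq_xy] := eqVneq x y; last exact: card_lcoset_meet.
have /subsetPn[g gS] : ~~ (S \subset [set e]).
  by rewrite subset1 negb_or S_nontrivial /=; apply/set0Pn; exists e; exact: subloop1 hS.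
rewrite in_set1 eq_sym => neq_eg.
have [l [l_orders card_meet]] := card_lcoset_meet hQ hS neq_eg.
exists l; split=> //.
by rewrite setIid (card_lcoset hQ) -card_meet !(lcoset_id hQ hS) ?setIid ?(subloop1 hS).
Qed.
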